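(* Let $\mathcal{F}$ be the infinite rooted tree with root $\delta$ in which every vertex has $p\ge2$ children, and let $a$ be an integral weight function on $\mathcal{F}$ with weight $\omega_a$. Then $a(\delta)\ge\widehat\gamma_0(\omega_a)$.
   Context: An integral weight function with weight $\omega$ (nonnegative integer) is a map $a:V(\mathcal{F})\to\mathbb{Z}_{\ge0}$ such that every infinite path $T$ from the root satisfies $\sum_{v\in T}a(v)\ge\omega$, and $a(v)\ge\sum_{u\text{ child of }v}a(u)$ for every vertex $v$. $\widehat\gamma(\omega)$ is the lexicographically smallest sequence $(\gamma_i)_{i\ge0}$ of nonnegative integers with $\gamma_i\ge p\gamma_{i+1}$ and $\sum_i\gamma_i=\omega$. *)

From mathcomp Require Import all_boot.
Set Implicit Arguments. Unset Strict Implicit. Unset Printing Implicit Defensive.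

(* The infinite rooted p-ary tree F: vertices are finite words over 'I_p,
   the root delta is the empty word [::], and the children of v are
   rcons v i for i : 'I_p. *)
Definition vertex (p : nat) := seq 'I_p.
Definition tree_root (p : nat) : vertex p := [::].
Definition child (p : nat) (v : vertex p) (i : 'I_p) : vertex p := rcons v i.

(* An infinite path from the root is determined by a choice function
   f : nat -> 'I_p; its vertex at depth n is the word f 0 ... f (n-1). *)
Definition path_vertex (p : nat) (f : nat -> 'I_p) (n : nat) : vertex p :=
  [seq f i | i <- iota 0 n].

(* Integral weight function with weight omega (values in nat). The sum over
   an infinite path of nonnegative integers is >= omega iff some partial sum is. *)
Definition integral_weight_function (p : nat) (a : vertex p -> nat) (omega : nat) :
  Prop :=
  (forall f : nat -> 'I_p, exists n, omega <= \sum_(k < n) a (path_vertex f k)) /\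
  (forall v : vertex p, \sum_(i < p) a (child v i) <= a v).

Definition admissible (p omega : nat) (g : nat -> nat) : Prop :=
  (forall i, p * g i.+1 <= g i) /\
  exists N, (forall i, N <= i -> g i = 0) /\ \sum_(i < N) g i = omega.

Definition lex_lt (g h : nat -> nat) : Prop :=
  exists k, (forall i, i < k -> g i = h i) /\ g k < h k.

Definition is_gamma_hat (p omega : nat) (g : nat -> nat) : Prop :=
  admissible p omega g /\
  forall h, admissible p omega h -> h = g \/ lex_lt g h.

(* Following at each vertex a child of least weight gives an infinite path
   whose weights decay by a factor p at every step, since the p children
   together weigh at most their parent.  Some finite part of that path carries
   total weight omega; truncating it greedily yields an admissible sequence
   whose first term is at most a(delta), and the lexicographic minimality of
   gamma-hat bounds gamma-hat_0 by the first term of any admissible sequence. *)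
From mathcomp Require Import all_boot.

Set Implicit Arguments.
Unset Strict Implicit.

Lemma gamma_hat_head_le (p omega : nat) (g h : nat -> nat) :
  is_gamma_hat p omega g -> admissible p omega h -> g 0 <= h 0.
Proof.
case=> _ gmin /gmin [-> // | [[|k] [eq_gh lt_gh]]]; first exact: ltnW.
by rewrite eq_gh.
Qed.

Lemma admissible_below_decaying (p : nat) (N : nat) (x : nat -> nat) (omega : nat) :
  (forall i, p * x i.+1 <= x i) -> omega <= \sum_(i < N) x i ->
  exists2 h, admissible p omega h & h 0 <= x 0.
Proof.
elim: N x omega => [|N IH] x omega x_decay.
  rewrite big_ord0 leqn0 => /eqP ->.
  exists (fun _ => 0) => //; split=> [i|]; first by rewrite muln0.
  by exists 0; rewrite big_ord0.
have [le_omega_x0 _ | lt_x0_omega] := leqP omega (x 0).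
  exists (fun i => if i is 0 then omega else 0) => //; split.
    by case=> [|i]; rewrite muln0.
  by exists 1; split; [case | rewrite big_ord1].
rewrite big_ord_recl -leq_subLR => /(IH _ _ (fun i => x_decay i.+1)).
case=> h [h_decay [M [h_supp h_sum]]] h0_le.
exists (fun i => if i is i'.+1 then h i' else x 0) => //; split.
  case=> [|i] //=; apply: leq_trans (x_decay 0).
  by rewrite leq_mul2l h0_le orbT.
exists M.+1; split; first by case=> // i /h_supp.
by rewrite big_ord_recl /= h_sum subnKC // ltnW.
Qed.

Section GreedyPath.

Variables (p : nat) (a : vertex p -> nat).
Hypothesis p_gt0 : 0 < p.
Hypothesis children_le : forall v, \sum_(i < p) a (child v i) <= a v.

Definition lightest_child (v : vertex p) : 'I_p :=
  [arg min_(i < Ordinal p_gt0) a (child v i)].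

Fixpoint greedy_vertex (n : nat) : vertex p :=
  if n is n'.+1 then child (greedy_vertex n') (lightest_child (greedy_vertex n'))
  else tree_root p.

Definition greedy_path (n : nat) : 'I_p := lightest_child (greedy_vertex n).

Lemma path_vertex_greedy (n : nat) : path_vertex greedy_path n = greedy_vertex n.
Proof.
elim: n => [|n IHn] //.
rewrite /path_vertex -addn1 iotaD map_cat /= cats1 -/(path_vertex _ n) IHn.
by rewrite add0n addn1.
Qed.

Lemma lightest_child_le (v : vertex p) : p * a (child v (lightest_child v)) <= a v.
Proof.
apply: leq_trans (children_le v).
rewrite -[p in p * _]card_ord -sum_nat_const.
apply: leq_sum => j _; rewrite /lightest_child.
by case: arg_minnP => // i _ ->.
Qed.

Lemma greedy_path_decay (n : nat) :
  p * a (path_vertex greedy_path n.+1) <= a (path_vertex greedy_path n).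
Proof. by rewrite !path_vertex_greedy; apply: lightest_child_le. Qed.

End GreedyPath.

Theorem mainTheorem10 (p : nat) (hp : 2 <= p) (a : vertex p -> nat) (omega : nat)
  (ha : integral_weight_function a omega)
  (g : nat -> nat) (hg : is_gamma_hat p omega g) :
  g 0 <= a (tree_root p).
Proof.
have p_gt0 : 0 < p by apply: leq_trans hp.
case: ha => paths_heavy children_le.
have [N sum_ge] := paths_heavy (greedy_path a p_gt0).
have [h h_adm h0_le] :=
  admissible_below_decaying (greedy_path_decay p_gt0 children_le) sum_ge.
exact: leq_trans (gamma_hat_head_le hg h_adm) h0_le.
Qed.
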